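(* Let the bifocusing indicator function $\mathfrak{F}_{\mathrm{BFM}}(\mathbf{x},\alpha)$ be as described in the context, and assume $4k|\mathbf{x}-\mathbf{t}_n|\gg1$ and $4k|\mathbf{x}-\mathbf{r}_n|\gg1$ for all $\mathbf{x}\in\Omega$ and all $n$. Then for $0\leq\alpha\leq\pi$, \[\mathfrak{F}_{\mathrm{BFM}}(\mathbf{x},2\pi-\alpha)=\mathfrak{F}_{\mathrm{BFM}}(\mathbf{x},\alpha).\]
   Context: Setting (two-dimensional time-harmonic scattering): $\Omega\subset\mathbb{R}^2$ is a bounded homogeneous background region with vacuum permittivity $\varepsilon_0$ and permeability $\mu_0$; the background wavenumber is $k=\omega\sqrt{\varepsilon_0\mu_0}$. $\Omega$ contains finitely many small, well-separated dielectric inhomogeneities $D_1,\dots,D_M$ with smooth boundaries, $D=\bigcup_m D_m$, with permittivity $\varepsilon(\mathbf{x})=\varepsilon_m>\varepsilon_0$ on $D_m$ and $\varepsilon_0$ elsewhere. $G(\mathbf{x},\mathbf{t})=-\frac{i}{4}H_0^{(1)}(k|\mathbf{x}-\mathbf{t}|)$. The scattered field is given by $u_{\mathrm{scat}}(\mathbf{r},\mathbf{t})\approx k^2\int_D\frac{\varepsilon(\mathbf{z})-\varepsilon_0}{\varepsilon_0\mu_0}G(\mathbf{r},\mathbf{z})G(\mathbf{z},\mathbf{t})\,d\mathbf{z}$. For a bistatic angle $\alpha$ and $n=1,\dots,N$: $\theta_n=2\pi(n-1)/N$, $\mathbf{t}_n=T(\cos\theta_n,\sin\theta_n)$, $\mathbf{r}_n=R(\cos(\theta_n+\alpha),\sin(\theta_n+\alpha))$,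 $T,R>0$. The indicator function is $\mathfrak{F}_{\mathrm{BFM}}(\mathbf{x},\alpha)=\left|\sum_{n=1}^{N}\frac{u_{\mathrm{scat}}(\mathbf{r}_n,\mathbf{t}_n)}{G(\mathbf{t}_n,\mathbf{x})G(\mathbf{r}_n,\mathbf{x})}\right|$, understood (in the far-field regime) through the representation \[\mathfrak{F}_{\mathrm{BFM}}(\mathbf{x},\alpha)=Nk^2\int_D\frac{\varepsilon(\mathbf{z})-\varepsilon_0}{\varepsilon_0\mu_0}\Big[J_0(k(1+\cos\alpha)|\mathbf{x}-\mathbf{z}|)J_0(k\sin\alpha|\mathbf{x}-\mathbf{z}|)+2\sum_{q\ge1}(-1)^qJ_{2q}(k(1+\cos\alpha)|\mathbf{x}-\mathbf{z}|)J_{2q}(k\sin\alpha|\mathbf{x}-\mathbf{z}|)\Big]d\mathbf{z},\] with $J_q$ the Bessel function of the first kind of order $q$. *)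

From HB Require Import structures.
From mathcomp Require Import all_boot all_order all_algebra.
From mathcomp Require Import all_classical all_reals all_analysis.
Set Implicit Arguments. Unset Strict Implicit. Unset Printing Implicit Defensive.
Import Order.TTheory GRing.Theory Num.Theory.
Import numFieldNormedType.Exports.
Local Open Scope classical_set_scope.
Local Open Scope ring_scope.

Definition rseries {R : realType} (u : nat -> R) : R :=
  limn (fun n => \sum_(0 <= m < n) u m).

Definition besselJ {R : realType} (q : nat) (y : R) : R :=
  rseries (fun m => (-1) ^+ m / ((m`!)%:R * ((m + q)`!)%:R) * (y / 2) ^+ (2 * m + q)).

Definition dist2 {R : realType} (x z : R * R) : R :=
  Num.sqrt ((x.1 - z.1) ^+ 2 + (x.2 - z.2) ^+ 2).

Definition leb2 {R : realType} :=
  ((@lebesgue_measure R) \x (@lebesgue_measure R))%E.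

Definition bfm_kernel {R : realType} (k alpha rho : R) : R :=
  besselJ 0 (k * (1 + cos alpha) * rho) * besselJ 0 (k * sin alpha * rho)
  + 2 * rseries (fun q => (-1) ^+ q.+1
        * besselJ (2 * q.+1) (k * (1 + cos alpha) * rho)
        * besselJ (2 * q.+1) (k * sin alpha * rho)).

(* The bifocusing indicator function, via its far-field representation
   F(x, alpha) = N k^2 int_D (eps(z)-eps0)/(eps0 mu0) [kernel] dz. *)
Definition F_BFM {R : realType} (N : nat) (k eps0 mu0 : R)
    (eps : R * R -> R) (D : set (R * R)) (x : R * R) (alpha : R) : R :=
  N%:R * k ^+ 2 *
  Rintegral leb2 D (fun z => (eps z - eps0) / (eps0 * mu0) * bfm_kernel k alpha (dist2 x z)).

From HB Require Import structures.
From mathcomp Require Import all_boot all_order all_algebra.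
From mathcomp Require Import all_classical all_reals all_analysis.
Import Order.TTheory GRing.Theory Num.Theory.
Import numFieldNormedType.Exports.
Local Open Scope classical_set_scope.
Local Open Scope ring_scope.

(* Replacing alpha by 2 pi - alpha keeps cos alpha and flips the sign of
   sin alpha.  Every Bessel function in the kernel has even order, hence is an
   even function, so the kernel, and with it the integrand of F_BFM, is
   unchanged pointwise.  The identity therefore holds for every alpha and
   needs none of the hypotheses on the medium. *)

Lemma cos_2piB (R : realType) (a : R) : cos (2 * pi - a) = cos a.
Proof. by rewrite cosB mulr_natl cos2pi sin2pi mul1r mul0r addr0. Qed.

Lemma sin_2piB (R : realType) (a : R) : sin (2 * pi - a) = - sin a.
Proof. by rewrite sinB mulr_natl cos2pi sin2pi mul1r mul0r sub0r. Qed.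

Lemma besselJN_even (R : realType) (n : nat) (y : R) :
  ~~ odd n -> besselJ n (- y) = besselJ n y.
Proof.
move=> even_n; rewrite /besselJ; congr rseries; apply/funext => m.
by congr (_ * _); rewrite mulNr exprNn -signr_odd oddD oddM /= (negbTE even_n) expr0 mul1r.
Qed.

Lemma bfm_kernel_2piB (R : realType) (k a rho : R) :
  bfm_kernel k (2 * pi - a) rho = bfm_kernel k a rho.
Proof.
rewrite /bfm_kernel cos_2piB sin_2piB mulrN mulNr besselJN_even //.
congr (_ + 2 * _); congr rseries; apply/funext => q.
by rewrite besselJN_even // oddM.
Qed.

Lemma F_BFM_2piB (R : realType) (N : nat) (k eps0 mu0 : R)
    (eps : R * R -> R) (D : set (R * R)) (x : R * R) (a : R) :
  F_BFM N k eps0 mu0 eps D x (2 * pi - a) = F_BFM N k eps0 mu0 eps D x a.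
Proof.
by rewrite /F_BFM; under eq_fun do rewrite bfm_kernel_2piB.
Qed.

Theorem corollary3p2 (R : realType)
    (omega eps0 mu0 : R) (N M : nat)
    (Omega : set (R * R)) (Dm : 'I_M -> set (R * R)) (epsm : 'I_M -> R)
    (eps : R * R -> R) (x : R * R) (alpha : R) :
  0 < omega -> 0 < eps0 -> 0 < mu0 -> (0 < N)%N ->
  (forall m, measurable (Dm m)) ->
  (forall m m', m != m' -> Dm m `&` Dm m' = set0) ->
  (forall m, Dm m `<=` Omega) ->
  (forall m, eps0 < epsm m) ->
  (forall m z, Dm m z -> eps z = epsm m) ->
  (forall z, ~ (\bigcup_m Dm m) z -> eps z = eps0) ->
  Omega x ->
  0 <= alpha <= pi ->
  let k := omega * Num.sqrt (eps0 * mu0) in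
  let D := \bigcup_m Dm m in
  F_BFM N k eps0 mu0 eps D x (2 * pi - alpha) = F_BFM N k eps0 mu0 eps D x alpha.
Proof. by move=> *; apply: F_BFM_2piB. Qed.
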